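(* Let $q$ be an odd prime power, $g\ge 1$, and let $\mathcal{Y}$ be the hyperelliptic curve over $\mathbb{F}_q$ with affine equation $y^2=f(x)$, $f(x)=x^{2g+1}+a_{2g}x^{2g}+\dots+a_0\in\mathbb{F}_q[x]$, of genus $g$. Let $X,T$ be positive integers, let $\gamma=\#\{z\in\mathbb{F}_q: f(z)=0\}$, and let $J^{\mathcal{Y}}_{\max}$ be the largest integer $J$ for which there exist pairwise distinct $\lambda_1,\dots,\lambda_J\in\mathbb{F}_q$ with $f(\lambda_j)\ne0$ for all $j$ such that, setting $h=\prod_{j=1}^J(x-\lambda_j)$, the curve $\mathcal{Y}$ has at least $2J+X+T+6g+2$ affine $\mathbb{F}_q$-rational points $P$ with $y(P)\ne 0$ and $h(P)\ne0$. Then $$J^{\mathcal{Y}}_{\max}=\begin{cases}\left\lfloor\dfrac{2q-(X+T+6g+2\gamma+2)}{4}\right\rfloor & \text{if } \#\mathcal{Y}(\mathbb{F}_q)\ge q+3g+\dfrac{X+T+4}{2},\\[2mm] \left\lfloor\dfrac{\#\mathcal{Y}(\mathbb{F}_q)-(X+T+6g+3+\gamma)}{2}\right\rfloor & \text{otherwise.}\end{cases}$$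
   Context: $\#\mathcal{Y}(\mathbb{F}_q)$ counts all $\mathbb{F}_q$-rational points of (the non-singular model of) $\mathcal{Y}$, including its unique point at infinity $P_\infty$. Interpretation: in the known XSTPIR construction from hyperelliptic curves, with $L=2J-g$ and $N=L+X+T+6g+2$, one needs $N+g=2J+X+T+6g+2$ rational points different from $P_\infty$, not on $y=0$ and not zeros of $h$; this yields an $X$-secure $T$-private PIR scheme of rate $L/N$, so $J^{\mathcal{Y}}_{\max}$ determines the maximal rate of that construction. *)

From HB Require Import structures.
From mathcomp Require Import all_boot all_order all_algebra.
From mathcomp Require Import separable.
Set Implicit Arguments. Unset Strict Implicit. Unset Printing Implicit Defensive.
Import Order.TTheory GRing.Theory Num.Theory.
Local Open Scope ring_scope.

Definition affine_points (F : finFieldType) (f : {poly F}) : {set F * F} :=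
  [set P : F * F | P.2 ^+ 2 == f.[P.1]].

(* #Y(F_q): rational points of the nonsingular model of y^2 = f(x), f squarefree
   of odd degree, char F <> 2: the (smooth) affine points plus the unique point
   at infinity P_oo. *)
Definition nb_points (F : finFieldType) (f : {poly F}) : nat :=
  (#|affine_points f| + 1)%N.

Definition nb_roots (F : finFieldType) (f : {poly F}) : nat :=
  #|[set z : F | root f z]|.

Definition hpoly (F : finFieldType) (J : nat) (lam : 'I_J -> F) : {poly F} :=
  \prod_(j < J) ('X - (lam j)%:P).

Definition admissibleJ (F : finFieldType) (f : {poly F}) (g X T J : nat) : Prop :=
  exists lam : 'I_J -> F,
    injective lam /\ (forall j, f.[lam j] != 0) /\
    (2 * J + X + T + 6 * g + 2 <=
       #|[set P in affine_points f | (P.2 != 0%R) && ((hpoly lam).[P.1] != 0%R)]|)%N.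

(* Over a field of odd order, a nonzero square has exactly two square roots, so
   the affine points with y <> 0 lie two above each x at which f takes a nonzero
   square value (a "residue"); the other x with f(x) <> 0 are "nonresidues".
   Removing the lines x = lambda_j deletes two such points for each lambda_j at
   a residue and none for a lambda_j at a nonresidue.  With s residues and n
   nonresidues, J is therefore admissible exactly when
   2J + X + T + 6g + 2 <= 2(s - (J - n)^+): spend the nonresidues first.  The
   largest such J, rewritten through #Y(F_q) = 1 + gamma + 2s and
   q = gamma + s + n, is the stated formula; the two cases correspond to whether
   the nonresidues run out. *)

From HB Require Import structures.
From mathcomp Require Import all_boot all_order all_algebra.
From mathcomp Require Import separable intdiv finfield zify.
Set Implicit Arguments.
Unset Strict Implicit.
Unset Printing Implicit Defensive.

Import Order.TTheory GRing.Theory Num.Theory.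
Local Open Scope ring_scope.

Lemma odd_card_finField_2_neq0 (F : finFieldType) : odd #|F| -> 2%:R != 0 :> F.
Proof.
move=> oddF; apply/negP => two0.
have char2 : (2 \in [pchar F])%N by rewrite inE /= two0.
have cardF : #|F| = (2 ^ logn 2 #|F|)%N := card_pprimeChar char2.
move: oddF; rewrite cardF oddX /=.
case: (logn _ _) cardF => [|//] /= cardF1.
by have := finNzRing_gt1 F; rewrite cardF1.
Qed.

Lemma exists_subset_card (T : finType) (A : {set T}) (k : nat) :
  (k <= #|A|)%N -> exists2 B : {set T}, B \subset A & #|B| = k.
Proof.
move=> le_kA; exists [set x in take k (enum A)].
  by apply/subsetP => x; rewrite inE => /mem_take; rewrite mem_enum.
have /card_uniqP card_take : uniq (take k (enum A)) by rewrite take_uniq ?enum_uniq.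
by rewrite cardsE card_take size_takel // -cardE.
Qed.

Lemma exists_injective_enum (T : finType) (L : {set T}) (J : nat) :
  #|L| = J -> exists2 lam : 'I_J -> T, injective lam & [set lam j | j in 'I_J] = L.
Proof.
move=> <-; exists enum_val; first exact: enum_val_inj.
apply/setP => x; apply/imsetP/idP => [[j _ ->]|xL]; first exact: enum_valP.
by exists (enum_rank_in xL x); rewrite ?enum_rankK_in.
Qed.

Section TwoClasses.
Variables (T : finType) (S N : {set T}).

Lemma card_setI_ge (L : {set T}) :
  L \subset S :|: N -> (#|L| - #|N| <= #|S :&: L|)%N.
Proof.
move=> sub_L; rewrite -(cardsID S L) setIC.
suff : (#|L :\: S| <= #|N|)%N by lia.
apply/subset_leq_card/subsetP => x; rewrite inE => /andP[xNS xL].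
by move: (subsetP sub_L x xL); rewrite inE (negbTE xNS).
Qed.

Hypothesis disSN : [disjoint S & N].

Lemma exists_set_card_setI (J : nat) :
  (J <= #|S| + #|N|)%N ->
  exists L : {set T}, [/\ L \subset S :|: N, #|L| = J & #|S :&: L| = J - #|N|]%N.
Proof.
move=> le_J.
have [BN sub_BN card_BN] := exists_subset_card (geq_minr J #|N|).
have [BS sub_BS card_BS] : exists2 BS : {set T}, BS \subset S & #|BS| = (J - #|N|)%N.
  by apply: exists_subset_card; lia.
have SBN0 : S :&: BN = set0 by apply/disjoint_setI0/(disjointWr sub_BN).
have BNS0 : BN :&: BS = set0.
  by apply/disjoint_setI0/(disjointWl sub_BN)/(disjointWr sub_BS); rewrite disjoint_sym.
exists (BN :|: BS); split.
- by rewrite setUC setUSS.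
- by rewrite cardsU BNS0 cards0 card_BN card_BS; lia.
- by rewrite setIUr SBN0 set0U (setIidPr sub_BS).
Qed.

End TwoClasses.

Section SquareValues.
Variable F : finFieldType.
Hypothesis oddF : odd #|F|.

Lemma card_nonzero_sqrt (a : F) :
  #|[set y : F | (y != 0) && (y ^+ 2 == a)]|
  = (2 * ((a != 0%R) && [exists y : F, y ^+ 2 == a]))%N.
Proof.
have [->|a0] /= := eqVneq a 0.
  by apply/eqP; rewrite cards_eq0; apply/eqP/setP => y; rewrite !inE sqrf_eq0 andNb.
have [[y0 /eqP y0E]|no_sqrt] /= := existsP; last first.
  apply/eqP; rewrite cards_eq0; apply/eqP/setP => y; rewrite !inE.
  by apply/negP => /andP[_ /eqP ya]; apply: no_sqrt; exists y; rewrite ya.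
have y0_neq0 : y0 != 0 by apply: contraNneq a0 => y00; rewrite -y0E y00 expr0n.
have -> : [set y : F | (y != 0) && (y ^+ 2 == a)] = [set y0; - y0].
  apply/setP => y; rewrite !inE -y0E eqf_sqr.
  have [->|//] := eqVneq y 0.
  by rewrite eq_sym (negbTE y0_neq0) eq_sym oppr_eq0 (negbTE y0_neq0).
rewrite cards2 -addr_eq0 -mulr2n -mulr_natr mulf_eq0.
by rewrite (negbTE y0_neq0) (negbTE (odd_card_finField_2_neq0 oddF)).
Qed.

Variable f : {poly F}.

Definition residues : {set F} :=
  [set x : F | (f.[x] != 0) && [exists y : F, y ^+ 2 == f.[x]]].
Definition nonresidues : {set F} :=
  [set x : F | (f.[x] != 0) && ~~ [exists y : F, y ^+ 2 == f.[x]]].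

Lemma disjoint_residues : [disjoint residues & nonresidues].
Proof. by rewrite -setI_eq0; apply/eqP/setP => x; rewrite !inE andbACA andbN andbF. Qed.

Lemma residuesU : residues :|: nonresidues = [set x : F | f.[x] != 0].
Proof. by apply/setP => x; rewrite !inE -andb_orr orbN andbT. Qed.

Lemma card_roots_residues : (nb_roots f + #|residues| + #|nonresidues|)%N = #|F|.
Proof.
rewrite -addnA -cardsUI (disjoint_setI0 disjoint_residues) cards0 addn0.
rewrite residuesU (_ : [set x | _] = ~: [set z | root f z]) ?cardsC //.
by apply/setP => x; rewrite !inE rootE.
Qed.

Lemma card_points_over (A : {set F}) :
  #|[set P in affine_points f | (P.2 != 0) && (P.1 \in A)]|
  = (2 * #|residues :&: A|)%N.
Proof.
rewrite -!sum1_card (partition_big fst predT) //= big_distrr /= [RHS]big_mkcond /=.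
apply: eq_bigr => x _; rewrite sum1dep_card muln1.
have -> : [set P | (P \in [set P in affine_points f | (P.2 != 0) && (P.1 \in A)])
                   && (P.1 == x)]
        = if x \in A then pair x @: [set y : F | (y != 0) && (y ^+ 2 == f.[x])]
          else set0.
  apply/setP => -[x' y]; rewrite !inE /=.
  have [-> | x'x] := eqVneq x' x.
    case: (x \in A); rewrite ?mem_imset ?inE /= ?andbT ?andbF //; last by move=> ? ? [].
    exact: andbC.
  rewrite andbF; case: (x \in A); rewrite ?inE //.
  symmetry; apply/negbTE/negP => /imsetP[y' _ [x'E _]].
  by move: x'x; rewrite x'E eqxx.
rewrite inE; case: (x \in A); rewrite ?andbT ?andbF ?cards0 //.
rewrite card_imset ?card_nonzero_sqrt; last by move=> ? ? [].
by rewrite inE; case: (_ && _).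
Qed.

Lemma card_affine_points : #|affine_points f| = (nb_roots f + 2 * #|residues|)%N.
Proof.
rewrite -(cardsID [set P : F * F | P.2 != 0]) addnC; congr (_ + _)%N.
  rewrite /nb_roots -(@card_imset _ _ (fun z : F => (z, 0 : F))); last by move=> ? ? [].
  apply: eq_card => -[x y]; rewrite !inE /= negbK.
  apply/andP/imsetP => [[/eqP y0 /eqP fx]|[z]].
    by exists x; rewrite ?y0 // inE rootE -fx y0 expr0n.
  by rewrite inE rootE => /eqP fz0 [-> ->]; rewrite eqxx expr0n fz0.
rewrite -(setIT residues) -card_points_over; apply: eq_card => -[x y].
by rewrite !inE andbT andbC.
Qed.

Lemma hpoly_neq0 (J : nat) (lam : 'I_J -> F) (x : F) :
  ((hpoly lam).[x] != 0) = (x \notin [set lam j | j in 'I_J]).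
Proof.
rewrite /hpoly horner_prod prodf_seq_neq0.
apply/allP/negP => [lamNx /imsetP[j _ xE] | xN j _].
  by move: (lamNx j (mem_index_enum j)); rewrite hornerXsubC xE subrr eqxx.
by rewrite hornerXsubC subr_eq0; apply: contra_not_neq xN => ->; apply: imset_f.
Qed.

Lemma card_good_points (J : nat) (lam : 'I_J -> F) :
  #|[set P in affine_points f | (P.2 != 0) && ((hpoly lam).[P.1] != 0)]|
  = (2 * #|residues :\: [set lam j | j in 'I_J]|)%N.
Proof.
rewrite setDE -card_points_over; apply: eq_card => P.
by rewrite !inE hpoly_neq0.
Qed.

Lemma admissibleJE (g X T J : nat) :
  admissibleJ f g X T J <->
  (2 * J + (X + T + 6 * g + 2) + 2 * (J - #|nonresidues|)
     <= 2 * #|residues|)%N.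
Proof.
split=> [[lam [lam_inj [f_lam good]]] | bound].
  set L := [set lam j | j in 'I_J].
  have sub_L : L \subset residues :|: nonresidues.
    by rewrite residuesU; apply/subsetP => _ /imsetP[j _ ->]; rewrite inE.
  have card_L : #|L| = J by rewrite card_imset // card_ord.
  have := card_setI_ge sub_L; have := subset_leq_card (subsetIl residues L).
  by move: good; rewrite card_good_points -/L cardsD card_L; lia.
have le_J : (J <= #|residues| + #|nonresidues|)%N by lia.
have [L [sub_L card_L card_RL]] := exists_set_card_setI disjoint_residues le_J.
have [lam lam_inj lamE] := exists_injective_enum card_L.
exists lam; split=> //; split.
  move=> j; have /subsetP/(_ (lam j)) := sub_L.
  by rewrite residuesU -lamE inE; apply; apply: imset_f.
by rewrite card_good_points lamE cardsD card_RL; lia.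
Qed.

End SquareValues.

Theorem theorem4p4 (F : finFieldType) (g X T : nat) (f : {poly F}) (Jmax : nat) :
  odd #|F| ->
  (1 <= g)%N -> (0 < X)%N -> (0 < T)%N ->
  f \is monic -> size f = (2 * g + 2)%N -> separable_poly f ->
  admissibleJ f g X T Jmax ->
  (forall J : nat, admissibleJ f g X T J -> (J <= Jmax)%N) ->
  Jmax%:Z =
    if (2 * #|F| + 6 * g + X + T + 4 <= 2 * nb_points f)%N
    then (((2 * #|F|)%:Z - (X + T + 6 * g + 2 * nb_roots f + 2)%:Z) %/ 4)%Z
    else (((nb_points f)%:Z - (X + T + 6 * g + 3 + nb_roots f)%:Z) %/ 2)%Z.
Proof.
move=> oddF _ _ _ _ _ _ adm_Jmax Jmax_max.
have /(admissibleJE oddF) le_Jmax := adm_Jmax.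
have /(admissibleJE oddF)/negP : ~ admissibleJ f g X T Jmax.+1.
  by move/Jmax_max; rewrite ltnn.
rewrite -ltnNge /nb_points (card_affine_points oddF) -(card_roots_residues f).
move: le_Jmax; move: (nb_roots f) #|residues f| #|nonresidues f| => r s n.
by case: ifP; lia.
Qed.
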